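(* Let $\beta\in(0,1)$, $\kappa>0$, and consider the uniform mesh $t_j=j\kappa$, $j=0,1,2,\dots$. Let $\Pi_1$ denote continuous piecewise linear interpolation at the nodes $t_j$ (i.e. $\Pi_1 v(t_j)=v(t_j)$ and $\Pi_1 v$ is linear on each $[t_j,t_{j+1}]$). Then there exists a constant $C$ depending only on $\beta$ such that for all $n\geq1$ \[ \int_0^{t_{n+1}}(t_{n+1}-\tau)^{\beta-1}\left|\Pi_1\tau^{1-\beta}-\tau^{1-\beta}\right|\,d\tau\leq C\kappa^{2-\beta}(t_{n+1}-\kappa)^{\beta-1}, \] where $\Pi_1\tau^{1-\beta}$ denotes the interpolant of the function $\tau\mapsto\tau^{1-\beta}$. *)

From HB Require Import structures.
From mathcomp Require Import all_boot all_order all_algebra.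
From mathcomp Require Import all_classical all_reals all_analysis.
Set Implicit Arguments. Unset Strict Implicit. Unset Printing Implicit Defensive.
Import Order.TTheory GRing.Theory Num.Theory.
Local Open Scope ring_scope.

Definition node {R : realType} (kappa : R) (j : nat) : R := j%:R * kappa.

Definition interp1 {R : realType} (kappa : R) (v : R -> R) (x : R) : R :=
  let tj := (Num.floor (x / kappa))%:~R * kappa in
  v tj + (x - tj) / kappa * (v (tj + kappa) - v tj).

From HB Require Import structures.
From mathcomp Require Import all_boot all_order all_algebra.
From mathcomp Require Import all_classical all_reals all_analysis.
From mathcomp Require Import ring lra zify.
Import Order.TTheory GRing.Theory Num.Theory.
Local Open Scope classical_set_scope.
Local Open Scope ring_scope.

(* With alpha = 1 - beta and tau = kappa s, the integrand equals
   (n + 1 - s)^(beta - 1) |Pi_1 s^alpha - s^alpha| on the unit mesh, and the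
   factors kappa^(beta - 1) kappa^alpha cancel.  On the cell [m, m + 1] the
   concavity of s^alpha bounds the interpolation error by
   alpha (1 - alpha) m^(alpha - 2) (m + 1 - s) when m >= 1, and by 1 when m = 0;
   on the last cell the factor n + 1 - s absorbs the singularity of the kernel.
   Each remaining product m^(-1-beta) (n - m)^(beta-1) is split according to
   which of m, n - m exceeds n/2, and comparing the resulting sums with
   integrals of powers gives a total of at most 10 n^(beta - 1), i.e.
   10 kappa^(2 - beta) (t_(n+1) - kappa)^(beta - 1) after integration. *)

Section powR_inequalities.
Context {R : realType}.

Lemma powR_le_bernoulli (r t : R) : 0 < r < 1 -> 0 <= t -> t `^ r <= 1 + r * (t - 1).
Proof.
move=> /andP[r0 r1] t0.
have := @conjugate_powR R (t `^ r) 1 r^-1 (1 - r)^-1 (powR_ge0 _ _) ler01.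
rewrite invr_gt0 r0 invr_gt0 subr_gt0 r1 !invrK addrC subrK => /(_ isT isT erefl).
rewrite mulr1 powR1 -powRrM mulfV ?gt_eqF// powRr1// => /le_trans; apply; lra.
Qed.

(* Bernoulli for the exponent (1 - r)^-1 in (0, 1), applied to t^(r - 1). *)
Lemma bernoulli_le_powR (r t : R) : r < 0 -> 0 < t -> 1 + r * (t - 1) <= t `^ r.
Proof.
move=> r0 t0.
have hq : 0 < (1 - r)^-1 < 1 by rewrite invr_gt0 invf_lt1; lra.
have := powR_le_bernoulli _ _ hq (powR_ge0 t (r - 1)).
have -> : t `^ (r - 1) `^ (1 - r)^-1 = t^-1.
  rewrite -powRrM (_ : (r - 1) * (1 - r)^-1 = -1) ?powR_inv1 ?(ltW t0) //.
  by rewrite -opprB mulNr mulfV // subr_eq0; apply/eqP; lra.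
rewrite powRB ?(gt_eqF t0) ?implybT// powRr1 ?(ltW t0)// => h.
have {}h := ler_wpM2l (ltW t0) h.
have tu : t * (t `^ r / t) = t `^ r by rewrite mulrCA divff ?gt_eqF ?mulr1.
rewrite mulfV ?gt_eqF // mulrDr mulr1 mulrCA mulrBr mulr1 tu in h.
have r1 : 0 < 1 - r by lra.
have := ler_wpM2l (ltW r1) h.
by rewrite mulrDr mulrA mulfV ?gt_eqF // mul1r; lra.
Qed.

Lemma powR_tangentE (r x y : R) : 0 < x ->
  x `^ r * (1 + r * (y / x - 1)) = x `^ r + r * x `^ (r - 1) * (y - x).
Proof.
move=> x0; rewrite powRB ?(gt_eqF x0) ?implybT // powRr1 ?(ltW x0) //.
by field; rewrite gt_eqF.
Qed.

Lemma powR_le_tangent (r x y : R) : 0 < r < 1 -> 0 < x -> 0 <= y ->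
  y `^ r <= x `^ r + r * x `^ (r - 1) * (y - x).
Proof.
move=> hr x0 y0; rewrite -powR_tangentE //.
have yx0 : 0 <= y / x by exact: divr_ge0 y0 (ltW x0).
have -> : y `^ r = x `^ r * (y / x) `^ r.
  by rewrite -(powRM _ (ltW x0) yx0) mulrC divfK ?lt0r_neq0.
by apply: ler_wpM2l; [exact: powR_ge0 | exact: powR_le_bernoulli].
Qed.

Lemma tangent_le_powR (r x y : R) : r < 0 -> 0 < x -> 0 < y ->
  x `^ r + r * x `^ (r - 1) * (y - x) <= y `^ r.
Proof.
move=> hr x0 y0; rewrite -powR_tangentE //.
have yx0 : 0 <= y / x by exact: divr_ge0 (ltW y0) (ltW x0).
have -> : y `^ r = x `^ r * (y / x) `^ r.
  by rewrite -(powRM _ (ltW x0) yx0) mulrC divfK ?lt0r_neq0.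
by apply: ler_wpM2l; [exact: powR_ge0 | apply: bernoulli_le_powR; rewrite ?divr_gt0].
Qed.

Lemma le0_ger_powR (r x y : R) : r <= 0 -> 0 < x -> x <= y -> y `^ r <= x `^ r.
Proof.
move=> r0 x0 xy; have y0 : 0 < y by exact: lt_le_trans xy.
rewrite -[r]opprK !(powRN _ (- r)) lef_pV2 ?posrE ?powR_gt0 //.
by apply: ge0_ler_powR => //; rewrite ?oppr_ge0 // nnegrE ltW.
Qed.

Lemma powR_le1 (r x : R) : 0 <= r -> 0 <= x <= 1 -> x `^ r <= 1.
Proof.
move=> r0 /andP[x0 x1]; apply: (@le_trans _ _ (1 `^ r)); last by rewrite powR1.
by apply: ge0_ler_powR; rewrite ?nnegrE.
Qed.

Lemma powR_le_half (r x y : R) : -2 <= r <= 0 -> 0 < x -> x / 2 <= y ->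
  y `^ r <= 4 * x `^ r.
Proof.
move=> /andP[r2 r0] x0 xy.
apply: (le_trans (le0_ger_powR _ _ _ r0 _ xy)); first by rewrite divr_gt0.
rewrite powRM ?invr_ge0 ?(ltW x0) // mulrC ler_wpM2r ?powR_ge0 //.
rewrite -powR_inv1 // -powRrM (_ : 4 = 2 `^ 2); last by rewrite powR_mulrn // expr2; lra.
by apply: ler_powR; lra.
Qed.

Lemma powR_mul_le_split (p q x y : R) : -2 <= p <= 0 -> -2 <= q <= 0 ->
  0 < x -> 0 < y ->
  x `^ p * y `^ q <= 4 * ((x + y) `^ p * y `^ q + (x + y) `^ q * x `^ p).
Proof.
move=> hp hq x0 y0; have xy0 : 0 < x + y by rewrite addr_gt0.
have hpq := mulr_ge0 (powR_ge0 (x + y) p) (powR_ge0 y q).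
have hqp := mulr_ge0 (powR_ge0 (x + y) q) (powR_ge0 x p).
have [xy|yx] := lerP ((x + y) / 2) x.
- have := ler_wpM2r (powR_ge0 y q) (powR_le_half _ _ _ hp xy0 xy); nra.
- have := ler_wpM2l (powR_ge0 x p) (powR_le_half _ _ _ hq xy0 (_ : _ <= y)).
  nra.
Qed.

End powR_inequalities.

Section interpolation_error.
Context {R : realType}.

Lemma supergradient_interp_error_le (f g : R -> R) (a s : R) :
  (forall x y, 0 < x -> 0 <= y -> f y <= f x + g x * (y - x)) ->
  0 < a -> a <= s <= a + 1 -> g s <= g a ->
  `| f a + (s - a) * (f (a + 1) - f a) - f s | <= (g a - g (a + 1)) * (a + 1 - s).
Proof.
move=> tangent a0 /andP[las sa1] gsa.
have s0 : 0 < s by exact: lt_le_trans las.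
have a10 : 0 < a + 1 by lra.
set w := a + 1 - s; have w0 : 0 <= w by rewrite subr_ge0.
have chord_le : f (a + 1) - f a <= g a.
  by have := tangent a (a + 1) a0 (ltW a10); lra.
have chord_ge : g (a + 1) <= f (a + 1) - f a.
  by have := tangent (a + 1) a a10 (ltW a0); lra.
have at_s_le : f s <= f (a + 1) - g (a + 1) * w.
  by have := tangent (a + 1) s a10 (ltW s0); rewrite /w; lra.
have at_s_ge : f (a + 1) - g s * w <= f s.
  by have := tangent s (a + 1) s0 (ltW a10); rewrite /w; lra.
have -> : f a + (s - a) * (f (a + 1) - f a) - f s =
          (f (a + 1) - f s) - w * (f (a + 1) - f a) by rewrite /w; ring.
rewrite ler_norml; apply/andP; split.
- have := ler_wpM2l w0 chord_le; have := ler_wpM2l w0 gsa; nra.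
- have := ler_wpM2l w0 chord_ge; nra.
Qed.

Lemma powR_interp_error_le (b a s : R) : 0 < b < 1 -> 0 < a -> a <= s <= a + 1 ->
  `| a `^ (1 - b) + (s - a) * ((a + 1) `^ (1 - b) - a `^ (1 - b)) - s `^ (1 - b) |
  <= (1 - b) * b * a `^ (-1 - b) * (a + 1 - s).
Proof.
move=> /andP[b0 b1] a0 /andP[las sa1].
have hr : 0 < 1 - b < 1 by apply/andP; split; lra.
have tangent x y : 0 < x -> 0 <= y ->
    y `^ (1 - b) <= x `^ (1 - b) + (1 - b) * x `^ (- b) * (y - x).
  move=> x0 y0; have := powR_le_tangent _ _ _ hr x0 y0.
  by rewrite (_ : 1 - b - 1 = - b) //; ring.
have gsa : (1 - b) * s `^ (- b) <= (1 - b) * a `^ (- b).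
  by rewrite ler_pM2l ?subr_gt0 //; apply: le0_ger_powR => //; lra.
apply: (le_trans (supergradient_interp_error_le (fun x => x `^ (1 - b))
  (fun x => (1 - b) * x `^ (- b)) a s tangent a0 _ gsa)); first by rewrite las.
rewrite -mulrBr; apply: ler_wpM2r; first by rewrite subr_ge0.
rewrite -mulrA ler_pM2l ?subr_gt0 //.
have nb : - b < 0 by lra.
have a10 : 0 < a + 1 by lra.
have := tangent_le_powR (- b) a (a + 1) nb a0 a10.
rewrite (_ : - b - 1 = -1 - b); last by ring.
lra.
Qed.

Lemma interp1_on_cell (kappa : R) (v : R -> R) (m : nat) (x : R) : 0 < kappa ->
  m%:R <= x / kappa < m%:R + 1 ->
  interp1 kappa v x =
    v (m%:R * kappa) + (x / kappa - m%:R) * (v (m%:R * kappa + kappa) - v (m%:R * kappa)).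
Proof.
move=> k0 hm; rewrite /interp1 (@floor_def _ _ m%:Z) ?intrD //.
by rewrite mulrBl mulfK ?gt_eqF.
Qed.

Lemma powR_interp1_errorE (a kappa : R) (m : nat) (x : R) : 0 < kappa ->
  m%:R <= x / kappa < m%:R + 1 ->
  interp1 kappa (fun t => t `^ a) x - x `^ a =
    kappa `^ a * (m%:R `^ a + (x / kappa - m%:R) * ((m%:R + 1) `^ a - m%:R `^ a)
                  - (x / kappa) `^ a).
Proof.
move=> k0 hm; rewrite (interp1_on_cell _ _ _ _ k0 hm).
set s := x / kappa; have m0 : (0 : R) <= m%:R := ler0n _ _.
have s0 : 0 <= s by apply: le_trans (proj1 (andP hm)).
have k0' := ltW k0.
have -> : m%:R * kappa + kappa = (m%:R + 1) * kappa by ring.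
have -> : x `^ a = s `^ a * kappa `^ a.
  by rewrite -powRM // /s divfK ?gt_eqF.
rewrite (powRM _ m0 k0') (powRM _ (addr_ge0 m0 ler01) k0'); ring.
Qed.

End interpolation_error.

Section powR_sums.
Context {R : realType}.

Lemma sum_powR_le_pow (b : R) (n : nat) : 0 < b < 1 ->
  \sum_(1 <= j < n) (j%:R : R) `^ (b - 1) <= n%:R `^ b / b.
Proof.
move=> hb; have /andP[b0 _] := hb.
pose F k : R := (k%:R : R) `^ b / b.
have step k : (k.+1%:R : R) `^ (b - 1) <= F k.+1 - F k.
  have := powR_le_tangent b (k.+1%:R) k%:R hb (ltr0Sn _ _) (ler0n _ _).
  rewrite /F -mulrBl ler_pdivlMr // -natr1; lra.
rewrite big_add1 /=.
apply: (@le_trans _ _ (\sum_(0 <= k < n.-1) (F k.+1 - F k))).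
  by apply: ler_sum_nat => k _; exact: step.
rewrite telescope_sumr // /F powR0 ?gt_eqF // mul0r subr0.
rewrite ler_pM2r ?invr_gt0 //.
by apply: ge0_ler_powR; rewrite ?nnegrE ?ler0n ?ler_nat ?leq_pred // ltW.
Qed.

Lemma sum_powR_le_inv (b : R) (n : nat) : 0 < b ->
  \sum_(1 <= j < n) (j%:R : R) `^ (-1 - b) <= 1 + b^-1.
Proof.
move=> b0; have [n1|] := ltnP 1 n; last first.
  by move=> n1; rewrite big_geq // addr_ge0 ?invr_ge0 ?ltW.
pose F k : R := - (k%:R : R) `^ (- b) / b.
have step k : (0 < k)%N -> (k.+1%:R : R) `^ (-1 - b) <= F k.+1 - F k.
  move=> k0; have nb : - b < 0 by rewrite oppr_lt0.
  have kR : (0 : R) < k%:R by rewrite ltr0n.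
  have := tangent_le_powR (- b) k.+1%:R k%:R nb (ltr0Sn _ _) kR.
  rewrite /F (_ : - b - 1 = -1 - b); last by ring.
  rewrite -mulrBl ler_pdivlMr // -natr1; lra.
rewrite big_ltn // powR1 lerD2l big_add1 /=.
apply: (@le_trans _ _ (\sum_(1 <= k < n.-1) (F k.+1 - F k))).
  by apply: ler_sum_nat => k /andP[k0 _]; exact: step.
rewrite telescope_sumr; last by rewrite -ltnS prednK // ltnW.
rewrite /F powR1 mulN1r opprK gerDr mulNr oppr_le0.
by rewrite divr_ge0 ?powR_ge0 // ltW.
Qed.

End powR_sums.

Section cell_bound.
Context {R : realType}.

Definition cell_bound (b : R) (n m : nat) : R :=
  if m == 0%N then n%:R `^ (b - 1)
  else (1 - b) * b * m%:R `^ (-1 - b) * (if m == n then 1 else (n - m)%:R `^ (b - 1)).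

Lemma cell_bound_ge0 (b : R) (n m : nat) : 0 < b < 1 -> 0 <= cell_bound b n m.
Proof.
move=> /andP[b0 b1]; rewrite /cell_bound; case: ifP => _; first exact: powR_ge0.
have bb : 0 <= (1 - b) * b by apply: mulr_ge0; lra.
apply: mulr_ge0; first exact: mulr_ge0 bb (powR_ge0 _ _).
by case: ifP => _ //; exact: powR_ge0.
Qed.

Lemma cell_error_le (b s : R) (n m : nat) : 0 < b < 1 -> (1 <= n)%N -> (m <= n)%N ->
  m%:R <= s < m%:R + 1 ->
  (n%:R + 1 - s) `^ (b - 1) *
  `| m%:R `^ (1 - b) + (s - m%:R) * ((m%:R + 1) `^ (1 - b) - m%:R `^ (1 - b))
     - s `^ (1 - b) | <= cell_bound b n m.
Proof.
move=> hb n1 mn /andP[ms sm]; have /andP[b0 b1] := hb.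
have mR : (m%:R : R) <= n%:R by rewrite ler_nat.
have w0 : 0 < n%:R + 1 - s by lra.
have kernel0 := powR_ge0 (n%:R + 1 - s) (b - 1).
rewrite /cell_bound; case: eqP => [m0|/eqP m0].
  subst m; rewrite -[X in _ <= X]mulr1; apply: ler_pM => //.
    by apply: le0_ger_powR; [lra | rewrite ltr0n | lra].
  rewrite powR0 ?subr_eq0 1?eq_sym ?lt_eqF // !add0r powR1 !subr0 mulr1.
  have hs : 0 <= s <= 1 by apply/andP; split; lra.
  have hal : 0 <= 1 - b by lra.
  have := powR_le1 _ _ hal hs; have := powR_ge0 s (1 - b).
  by rewrite ler_norml => ? ?; apply/andP; split; lra.
have m0' : 0 < (m%:R : R) by rewrite ltr0n lt0n.
have sm' : m%:R <= s <= m%:R + 1 by rewrite ms ltW.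
have err := powR_interp_error_le _ _ _ hb m0' sm'.
have c0 : 0 <= (1 - b) * b * m%:R `^ (-1 - b).
  by rewrite mulr_ge0 ?powR_ge0 // mulr_ge0 //; lra.
case: eqP => [mn'|/eqP mn'].
  subst m; rewrite mulr1.
  apply: (le_trans (ler_wpM2l kernel0 err)).
  rewrite mulrCA -[X in _ <= X]mulr1 ler_wpM2l // mulrC mulr_powRB1 ?(ltW w0) //.
  by apply: powR_le1; [lra | apply/andP; split; lra].
have mlt : (m < n)%N by rewrite ltn_neqAle mn' mn.
rewrite [X in _ <= X]mulrC; apply: ler_pM => //.
  by apply: le0_ger_powR; [lra | rewrite ltr0n subn_gt0 | rewrite natrB ?(ltnW mlt) //; lra].
by apply: (le_trans err); rewrite -[X in _ <= X]mulr1 ler_wpM2l //; lra.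
Qed.

Lemma sum_cell_bound_le (b : R) (n : nat) : 0 < b < 1 -> (1 <= n)%N ->
  \sum_(m < n.+1) cell_bound b n m <= 10 * n%:R `^ (b - 1).
Proof.
move=> hb n1; have /andP[b0 b1] := hb.
have nR : 1 <= (n%:R : R) by rewrite ler1n.
set P := (n%:R : R) `^ (b - 1); set Q := (n%:R : R) `^ (-1 - b).
have P0 : 0 <= P := powR_ge0 _ _.
have Q0 : 0 <= Q := powR_ge0 _ _.
have QP : Q <= P by apply: ler_powR => //; lra.
have Qn : Q * n%:R `^ b <= P.
  rewrite -powRD; last by rewrite (gt_eqF (lt_le_trans ltr01 nR)) implybT.
  by apply: ler_powR => //; lra.
have bb : 0 <= (1 - b) * b by apply: mulr_ge0; lra.
rewrite -(big_mkord xpredT (cell_bound b n)) big_ltn // big_nat_recr //=.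
have -> : cell_bound b n 0 = P by [].
have -> : cell_bound b n n = (1 - b) * b * Q.
  by rewrite /cell_bound eqxx gtn_eqF // mulr1.
have inner : \sum_(1 <= m < n) cell_bound b n m <=
    (1 - b) * b * (4 * (P * (1 + b^-1) + Q * (n%:R `^ b / b))).
  apply: (@le_trans _ _ (\sum_(1 <= m < n) (1 - b) * b *
      (4 * (P * m%:R `^ (-1 - b) + Q * (n - m)%:R `^ (b - 1))))).
    apply: ler_sum_nat => m /andP[m1 mn].
    rewrite /cell_bound gtn_eqF // ltn_eqF // -mulrA ler_wpM2l // mulrC.
    have hp : -2 <= b - 1 <= 0 by apply/andP; split; lra.
    have hq : -2 <= -1 - b <= 0 by apply/andP; split; lra.
    have x0 : (0 : R) < (n - m)%:R by rewrite ltr0n subn_gt0.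
    have y0 : (0 : R) < m%:R by rewrite ltr0n.
    have := powR_mul_le_split _ _ _ _ hp hq x0 y0.
    by rewrite -natrD subnK // ltnW.
  rewrite -mulr_sumr ler_wpM2l // -mulr_sumr ler_wpM2l //.
  rewrite big_split /= -!mulr_sumr lerD // ler_wpM2l //; first exact: sum_powR_le_inv.
  rewrite big_nat_rev /= (eq_big_nat _ _ (F2 := fun m => (m%:R : R) `^ (b - 1))).
    exact: sum_powR_le_pow.
  by move=> m /andP[m1 mn]; congr (_ `^ _); congr (_%:R); lia.
have e : (1 - b) * b * (4 * (P * (1 + b^-1) + Q * (n%:R `^ b / b))) =
    4 * ((1 - b) * (1 + b) * P + (1 - b) * (Q * n%:R `^ b)).
  by field; rewrite gt_eqF.
rewrite e in inner.
have h1 : (1 - b) * (1 + b) * P <= P by rewrite ler_piMl //; nra.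
have h2 : (1 - b) * (Q * n%:R `^ b) <= P.
  by apply: le_trans Qn; rewrite ler_piMl ?mulr_ge0 ?powR_ge0 //; lra.
have h3 : (1 - b) * b * Q <= P by apply: le_trans QP; rewrite ler_piMl //; nra.
lra.
Qed.

Lemma kernel_interp_error_le_step (b kappa tau : R) (n : nat) :
  0 < b < 1 -> 0 < kappa -> (1 <= n)%N -> 0 <= tau <= node kappa n.+1 ->
  (node kappa n.+1 - tau) `^ (b - 1)
    * `| interp1 kappa (fun s => s `^ (1 - b)) tau - tau `^ (1 - b) |
  <= \sum_(m < n.+1) cell_bound b n m * \1_(`[m%:R * kappa, m.+1%:R * kappa[) tau.
Proof.
move=> hb k0 n1 /andP[tau0 tauT]; have /andP[_ b1] := hb.
have terms0 m x : 0 <= cell_bound b n m * \1_(`[m%:R * kappa, m.+1%:R * kappa[) x.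
  by rewrite mulr_ge0 ?cell_bound_ge0 // indicE ler0n.
have [->|tau_ne] := eqVneq tau (node kappa n.+1).
  have b1' : b - 1 != 0 by rewrite subr_eq0 lt_eqF.
  by rewrite subrr powR0 // mul0r; apply: sumr_ge0 => m _; exact: terms0.
set s := tau / kappa; set m := Num.truncn s.
have s0 : 0 <= s by rewrite divr_ge0 // ltW.
have /andP[ms sm] := truncn_itv s0; rewrite -/m -natr1 in ms sm.
have sn : s < n%:R + 1.
  rewrite ltr_pdivrMr // natr1; move: tauT; rewrite le_eqVlt (negbTE tau_ne) /=.
  by rewrite /node.
have mn : (m <= n)%N by rewrite -ltnS -(ltr_nat R) -natr1; lra.
rewrite (bigD1 (Ordinal (mn : (m < n.+1)%N))) //= indicE mem_set; last first.
  by rewrite /= in_itv /= -ler_pdivlMr // -ltr_pdivrMr // -/s -natr1 ms sm.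
rewrite mulr1 -[X in X <= _]addr0 lerD //; last by apply: sumr_ge0 => i _; exact: terms0.
rewrite (powR_interp1_errorE _ _ m _ k0) -/s; last by rewrite -/s ms sm.
have -> : node kappa n.+1 - tau = (n%:R + 1 - s) * kappa.
  by rewrite /node /s -natr1 mulrBl divfK ?gt_eqF.
have kk : kappa `^ (b - 1) * kappa `^ (1 - b) = 1.
  rewrite -powRD; last by rewrite (gt_eqF k0) implybT.
  by rewrite (_ : b - 1 + (1 - b) = 0) ?powRr0 //; ring.
rewrite normrM ger0_norm ?powR_ge0 // powRM ?(ltW k0) //; last by lra.
rewrite -mulrA (mulrA (kappa `^ (b - 1))) kk mul1r.
by apply: cell_error_le => //; rewrite ms sm.
Qed.

End cell_bound.

Section integral_monotonicity.
Local Open Scope ereal_scope.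
Context d (T : measurableType d) (R : realType).
Variable mu : {measure set T -> \bar R}.

(* No measurability is needed: the integral of a nonnegative function is a
   supremum over the simple functions below it. *)
Lemma ge0_le_integral_nonmeasurable (D : set T) (f g : T -> \bar R) :
  (forall x, D x -> 0 <= f x) -> (forall x, D x -> f x <= g x) ->
  \int[mu]_(x in D) f x <= \int[mu]_(x in D) g x.
Proof.
move=> f0 fg; rewrite !(integral_mkcond D).
have fD0 x : 0 <= (f \_ D) x by rewrite /patch; case: ifP => // /set_mem /f0.
have gD0 x : 0 <= (g \_ D) x.
  by rewrite /patch; case: ifP => // /set_mem Dx; exact: le_trans (f0 _ Dx) (fg _ Dx).
rewrite (ge0_integralTE _ fD0) (ge0_integralTE _ gD0).
apply: ereal_sup_le => _ [h hf <-]; exists h => // x.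
by apply: le_trans (hf x) _; rewrite /patch; case: ifP => // /set_mem /fg.
Qed.

End integral_monotonicity.

Section step_integral.
Local Open Scope ereal_scope.
Context {R : realType}.

Lemma integral_step_le (D : set R) (n : nat) (c a b : nat -> R) : measurable D ->
  (forall j, (0 <= c j)%R) -> (forall j, (a j <= b j)%R) ->
  \int[lebesgue_measure]_(x in D) (\sum_(j < n) c j * \1_(`[a j, b j[) x)%:E
  <= (\sum_(j < n) c j * (b j - a j))%:E.
Proof.
move=> mD c0 ab.
under eq_integral do rewrite -sumEFin.
rewrite ge0_integral_sum //; last 2 first.
- move=> j; apply/measurable_realfun.measurable_EFinP.
  apply/measurable_realfun.measurable_funM; first exact: measurable_cst.
  exact: measurable_realfun.measurable_indic.
- by move=> j x _; rewrite lee_fin mulr_ge0 // indicE ler0n.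
rewrite -sumEFin; apply: lee_sum => j _.
have := @integralZl_indic _ _ _ lebesgue_measure _ mD (fun=> `[a j, b j[%classic) (c j).
move=> /= ->; last 2 first.
- by move=> cj; have := c0 j; rewrite leNgt cj.
- exact: measurable_itv.
rewrite integral_indic //= EFinM lee_wpmul2l ?lee_fin //.
apply: (@le_trans _ _ (lebesgue_measure (`[a j, b j[%classic : set R))).
  exact: measureIl.
by rewrite lebesgue_measure_itv /= lte_fin; case: ifP; rewrite -?EFinD ?lee_fin ?subr_ge0.
Qed.

End step_integral.

Theorem lemma5p5 (R : realType) (beta : R) (hb0 : 0 < beta) (hb1 : beta < 1) :
  exists C : R, forall (kappa : R), 0 < kappa -> forall n : nat, (1 <= n)%N ->
    (\int[lebesgue_measure]_(tau in `[0%R, (node kappa n.+1)%R])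
        ((node kappa n.+1 - tau) `^ (beta - 1)
         * `| interp1 kappa (fun s => s `^ (1 - beta)) tau - tau `^ (1 - beta) |)%:E
     <= (C * kappa `^ (2 - beta) * (node kappa n.+1 - kappa) `^ (beta - 1))%:E)%E.
Proof.
have hb : 0 < beta < 1 by rewrite hb0 hb1.
exists 10 => kappa k0 n n1.
pose step tau := \sum_(m < n.+1) cell_bound beta n m
                   * \1_(`[m%:R * kappa, m.+1%:R * kappa[) tau.
apply: (le_trans (@ge0_le_integral_nonmeasurable _ _ _ lebesgue_measure _ _
  (fun tau => (step tau)%:E) _ _)).
- by move=> x _; rewrite lee_fin mulr_ge0 ?powR_ge0.
- move=> x; rewrite /= in_itv /= => hx; rewrite lee_fin.
  exact: kernel_interp_error_le_step.
apply: (le_trans (integral_step_le _ _ _ (fun j => j%:R * kappa) (fun j => j.+1%:R * kappa)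
  (measurable_itv _) (fun m => cell_bound_ge0 _ _ m hb) _)).
  by move=> m; rewrite ler_pM2r // ler_nat.
rewrite lee_fin.
have cell_width m : m.+1%:R * kappa - m%:R * kappa = kappa by rewrite -natr1; ring.
under eq_bigr do rewrite cell_width.
rewrite -mulr_suml.
have -> : node kappa n.+1 - kappa = n%:R * kappa by rewrite /node -natr1; ring.
rewrite powRM ?(ltW k0) // mulrAC -!mulrA -powRD; last by rewrite (gt_eqF k0) implybT.
rewrite (_ : beta - 1 + (2 - beta) = 1) ?(powRr1 (ltW k0)); last by ring.
by rewrite mulrA ler_pM2r //; exact: sum_cell_bound_le.
Qed.
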